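(* Let $A$ be a subset of a real Banach space $X$. If $\mathbf E(A)<\infty$, then $A$ is precompact.
   Context: A brick in $X$ is a set $K_{\mathcal B,\mathcal E}=\{x\in X:\ |e_n^*(x)|\le\varepsilon_n\ \forall n\}$, where $\mathcal B=(e_n)$ is a normalized Schauder basis of $X$ with biorthogonal functionals $(e_n^* )$ and $\mathcal E=(\varepsilon_n)$ is a sequence of nonnegative numbers. Its unconditional radius is $r^{\rm unc}(K_{\mathcal B,\mathcal E})=\sup_{\theta_n=\pm1}\|\sum_n\theta_n\varepsilon_ne_n\|$ (norm of a divergent series $=\infty$). The entropy is $\mathbf E(A)=\inf\{r^{\rm unc}(K_{\mathcal B,\mathcal E}): A\subseteq K_{\mathcal B,\mathcal E}\}$, equal to $\infty$ if no brick of finite unconditional radius contains $A$. A set is precompact if for every $\varepsilon>0$ it contains a finite $\varepsilon$-net. *)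

From HB Require Import structures.
From mathcomp Require Import all_boot all_order all_algebra.
From mathcomp Require Import all_classical all_reals all_analysis.
Set Implicit Arguments. Unset Strict Implicit. Unset Printing Implicit Defensive.
Import Order.TTheory GRing.Theory Num.Theory.
Import numFieldNormedType.Exports.
Local Open Scope classical_set_scope.
Local Open Scope ring_scope.

Section Bricks.
Variables (R : realType) (X : completeNormedModType R).

Definition schauder_basis (e : nat -> X) : Prop :=
  forall x : X, exists! a : nat -> R,
    series (fun k => a k *: e k) @ \oo --> x.

Definition normalized (e : nat -> X) : Prop := forall n, `|e n| = 1.

Definition normalized_schauder_basis (e : nat -> X) : Prop :=
  schauder_basis e /\ normalized e.

(* biorthogonal (coefficient) functionals: e_n^*(x) = the n-th coefficient of
   the unique expansion of x (meaningful when e is a Schauder basis). *)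
Definition coef (e : nat -> X) (n : nat) (x : X) : R :=
  xget (fun _ => 0) [set a : nat -> R | series (fun k => a k *: e k) @ \oo --> x] n.

Definition brick (e : nat -> X) (eps : nat -> R) : set X :=
  [set x | forall n, `|coef e n x| <= eps n].

Definition series_norm (u : nat -> X) : \bar R :=
  if `[< cvg (series u @ \oo) >] then (`|lim (series u @ \oo)|)%:E else +oo%E.

Definition r_unc (e : nat -> X) (eps : nat -> R) : \bar R :=
  ereal_sup [set r | exists theta : nat -> R,
     (forall n, theta n = 1 \/ theta n = -1) /\
     r = series_norm (fun n => (theta n * eps n) *: e n)].

(* entropy E(A); the infimum over the empty set is +oo *)
Definition entropy (A : set X) : \bar R :=
  ereal_inf [set r | exists (e : nat -> X) (eps : nat -> R),
     [/\ normalized_schauder_basis e, (forall n, 0 <= eps n),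
         A `<=` brick e eps & r = r_unc e eps]].

Definition precompact_net (A : set X) : Prop :=
  forall eps : R, 0 < eps -> exists s : seq X,
    (forall y, y \in s -> A y) /\
    (forall x, A x -> exists2 y, y \in s & `|x - y| < eps).

End Bricks.

(* If E(A) < +oo, A lies in a brick K_{B,E} all of whose signed series
   sum_n +-eps_n e_n converge.  A gliding-hump argument makes their tails small
   uniformly in the signs, and since |e_n^*(x)| <= eps_n, convexity of the norm
   bounds the tail of the expansion of every x in A by such a signed tail.
   Hence A is uniformly close to its partial sums of order N, whose
   coefficients range over a bounded box of R^N, and boxes have finite nets. *)

From mathcomp Require Import all_boot all_order all_algebra.
From mathcomp Require Import all_classical all_reals all_analysis.
From mathcomp Require Import ring lra.
Set Implicit Arguments.
Unset Strict Implicit.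
Unset Printing Implicit Defensive.

Import Order.TTheory GRing.Theory Num.Theory.
Import numFieldNormedType.Exports.
Local Open Scope classical_set_scope.
Local Open Scope ring_scope.

(* For g b > b, the blocks [b, g b) with b = 0, g 0, g (g 0), ... partition
   nat; block_start g n is the left end of the block containing n. *)
Fixpoint block_start (g : nat -> nat) (n : nat) : nat :=
  if n is k.+1 then
    if (n < g (block_start g k))%N then block_start g k else n
  else 0.

Lemma block_start_within g b n : block_start g b = b ->
  (b <= n < g b)%N -> block_start g n = b.
Proof.
move=> hb /andP[bn]; rewrite -(subnKC bn).
elim: (n - b)%N => [|k IH]; first by rewrite addn0.
by rewrite addnS => h /=; rewrite IH ?h // ltnW.
Qed.

Lemma block_start_next g b : block_start g b = b -> (b < g b)%N ->
  block_start g (g b) = g b.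
Proof.
move=> hb hg; have gb_gt0 : (0 < g b)%N by apply: leq_ltn_trans hg.
rewrite -{1}(prednK gb_gt0) /= (block_start_within hb) ?prednK ?ltnn //.
by rewrite leqnn andbT -ltnS prednK.
Qed.

Lemma block_start_unbounded g : (forall b, (b < g b)%N) ->
  forall K, exists2 b, block_start g b = b & (K <= b)%N.
Proof.
move=> hg; elim=> [|K [b hb Kb]]; first by exists 0%N.
have [Kb'|bK] := ltnP K b; first by exists b.
exists (g b); first exact: block_start_next.
by apply: leq_trans (hg b); rewrite ltnS.
Qed.

Section FiniteNets.
Variables (R : archiRealFieldType) (T : eqType).

Definition finite_net (B : set T) (d : T -> T -> R) (eta : R) :=
  exists s : seq T, (forall y, y \in s -> B y) /\
    (forall x, B x -> exists2 y, y \in s & d x y < eta).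

Lemma finite_net_small (B : set T) d eta :
  (forall x y, B x -> B y -> d x y < eta) -> finite_net B d eta.
Proof.
move=> H; have [[y By]|nB] := pselect (exists y, B y).
  exists [:: y]; split; first by move=> z; rewrite inE => /eqP ->.
  by move=> x Bx; exists y; [rewrite inE | exact: H].
by exists [::]; split => // x Bx; exfalso; apply: nB; exists x.
Qed.

Lemma finite_net_interval (f : T -> R) (a : R) (K : nat) (B : set T) (eta : R) :
  0 < eta -> (forall x, B x -> a <= f x <= a + K%:R * eta) ->
  finite_net B (fun x y => `|f x - f y|) eta.
Proof.
move=> eta0; elim: K a B => [|K IH] a B hB.
  apply: finite_net_small => x y /hB + /hB; rewrite mul0r addr0.
  move=> /andP[h1 h2] /andP[h3 h4].
  have -> : f x - f y = 0 by lra.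
  by rewrite normr0.
have hK : K.+1%:R * eta = K%:R * eta + eta by rewrite -natr1 mulrDl mul1r.
have [s1 [s1B s1H]] :
    finite_net (B `&` [set x | f x < a + eta]) (fun x y => `|f x - f y|) eta.
  apply: finite_net_small => x y [Bx /= hx] [By /= hy].
  move: (hB x Bx) (hB y By) => /andP[h1 h2] /andP[h3 h4].
  by rewrite ltr_norml; apply/andP; split; lra.
have [s2 [s2B s2H]] :
    finite_net (B `&` [set x | a + eta <= f x]) (fun x y => `|f x - f y|) eta.
  apply: (IH (a + eta)) => x [Bx /= hx]; move: (hB x Bx); rewrite hK => /andP[_ h2].
  by apply/andP; split; [exact: hx | lra].
exists (s1 ++ s2); split.
  by move=> y; rewrite mem_cat => /orP[/s1B []|/s2B []].
move=> x Bx; have [hx|hx] := ltP (f x) (a + eta).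
  by have [y ys hy] := s1H x (conj Bx hx); exists y => //; rewrite mem_cat ys.
by have [y ys hy] := s2H x (conj Bx hx); exists y => //; rewrite mem_cat ys orbT.
Qed.

Lemma finite_net_coords (c : nat -> T -> R) (eps : nat -> R) (N : nat)
    (B : set T) (eta : R) :
  0 < eta -> (forall n x, B x -> `|c n x| <= eps n) ->
  finite_net B (fun x y => \sum_(0 <= n < N) `|c n x - c n y|) eta.
Proof.
elim: N B eta => [|N IH] B eta eta0 hc.
  by apply: finite_net_small => x y _ _; rewrite big_geq.
have eta3 : 0 < eta / 3 by lra.
have [s1 [s1B s1H]] : finite_net B (fun x y => `|c N x - c N y|) (eta / 3).
  pose K := Num.Def.archi_bound (2 * `|eps N| / (eta / 3)).
  have hK : 2 * `|eps N| < K%:R * (eta / 3).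
    by rewrite -ltr_pdivrMr // archi_boundP // divr_ge0 ?mulr_ge0 // ltW.
  apply: (finite_net_interval (a := - `|eps N|) (K := K) eta3) => x Bx.
  move: (hc N x Bx); rewrite ler_norml => /andP[h1 h2].
  have := ler_norm (eps N); move: hK; set k := K%:R * _ => hK h0.
  by apply/andP; split; lra.
have [F F_net] := choice (fun y => IH (B `&` [set x | `|c N x - c N y| < eta / 3])
  (eta / 3) eta3 (fun n x '(conj Bx _) => hc n x Bx)).
exists (flatten [seq F y | y <- s1]); split.
  by move=> z /flatten_mapP [y ys zF]; have [+ _] := F_net y => /(_ z zF) [].
move=> x Bx; have [y1 y1s h1] := s1H x Bx.
have [F1B /(_ x (conj Bx h1)) [y2 y2F h2]] := F_net y1.
have [_ /= h3] := F1B y2 y2F.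
exists y2; first by apply/flatten_mapP; exists y1.
rewrite big_nat_recr //=.
have : `|c N x - c N y2| <= `|c N x - c N y1| + `|c N y2 - c N y1|.
  by have -> : c N x - c N y2 = (c N x - c N y1) - (c N y2 - c N y1); [ring | exact: ler_normB].
move: h1 h2 h3 => /= h1 h2 h3; lra.
Qed.

End FiniteNets.

Section SignedSums.
Variables (R : realFieldType) (V : normedModType R).

Definition signs (th : nat -> R) := forall n, th n = 1 \/ th n = -1.

Lemma norm_convex_le_max (u w : V) (l : R) : 0 <= l <= 1 ->
  `|l *: u + (1 - l) *: w| <= Num.max `|u| `|w|.
Proof.
case/andP=> l0 l1; apply: le_trans (ler_normD _ _) _.
rewrite !normrZ ger0_norm // ger0_norm ?subr_ge0 //.
have := le_max `|u| `|u| `|w|; have := le_max `|w| `|u| `|w|.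
rewrite !lexx orbT /= => /idP hw /idP hu; set M := Num.max _ _ in hu hw *.
nra.
Qed.

Lemma exists_sign_norm_le (d v : V) (a eps : R) : `|a| <= eps ->
  exists2 s : R, (s = 1 \/ s = -1) & `|d + a *: v| <= `|d + (s * eps) *: v|.
Proof.
move=> ha; suff : `|d + a *: v| <= Num.max `|d + eps *: v| `|d + (-1 * eps) *: v|.
  have [_|_] := leP `|d + eps *: v| `|d + (-1 * eps) *: v|.
    by exists (-1); [right | ].
  by move=> H; exists 1; [left | rewrite mul1r].
have [eps0|eps_neq0] := eqVneq eps 0.
  by move: ha; rewrite eps0 normr_le0 => /eqP ->; rewrite mulr0 scale0r le_max lexx.
have eps_gt0 : 0 < eps by rewrite lt_def eps_neq0 (le_trans _ ha).
move: ha; rewrite ler_norml => /andP[ha1 ha2].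
pose l := (eps + a) / (2 * eps).
have -> : d + a *: v = l *: (d + eps *: v) + (1 - l) *: (d + (-1 * eps) *: v).
  have -> : a = l * eps + (1 - l) * (-1 * eps) by rewrite /l; field.
  by rewrite !scalerDr !scalerA addrACA -!scalerDl [l + _]addrC subrK scale1r.
apply: norm_convex_le_max; apply/andP; split.
  by rewrite /l divr_ge0 // ?mulr_ge0 //; lra.
by rewrite /l ler_pdivrMr ?mulr_gt0 //; lra.
Qed.

Lemma norm_sum_le_signed_sum (e : nat -> V) (eps a : nat -> R) (N M : nat) (c : V) :
  (forall n, `|a n| <= eps n) -> exists2 th : nat -> R, signs th &
  `|c + \sum_(N <= n < M) a n *: e n| <= `|c + \sum_(N <= n < M) (th n * eps n) *: e n|.
Proof.
move=> ha; elim: M c => [|M IH] c.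
  by exists (fun=> 1) => [n|]; [left | rewrite !big_geq].
have [NM|MN] := leqP N M; last first.
  by exists (fun=> 1) => [n|]; [left | rewrite !big_geq].
rewrite !big_nat_recr //=.
have [th sth H] := IH (c + a M *: e M).
have [s ss Hs] := exists_sign_norm_le (c + \sum_(N <= n < M) (th n * eps n) *: e n) (e M) (ha M).
exists (fun n => if n == M then s else th n).
  by move=> n; case: eqP.
rewrite big_nat_recr //= eqxx.
have -> : \sum_(N <= n < M) ((if n == M then s else th n) * eps n) *: e n =
          \sum_(N <= n < M) (th n * eps n) *: e n.
  by apply: eq_big_nat => n /andP[_ nM]; rewrite (ltn_eqF nM).
rewrite !addrA; apply: le_trans Hs; by move: H; rewrite !(addrAC c (a M *: e M)).
Qed.

Lemma signed_tails_unif_small (e : nat -> V) (eps : nat -> R) :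
  (forall th, signs th -> cvg (series (fun n => (th n * eps n) *: e n) @ \oo)) ->
  forall del, 0 < del -> exists N, forall M th, signs th ->
    `|\sum_(N <= n < M) (th n * eps n) *: e n| <= del.
Proof.
(* Gluing blocks of size > del into a single sign sequence gives a signed
   series that is not Cauchy. *)
move=> Hc del del0; apply: contrapT => /forallNP no_N.
have big_block N : exists p : nat * (nat -> R), signs p.2 /\
    del < `|\sum_(N <= n < p.1) (p.2 n * eps n) *: e n|.
  have /existsNP [M /existsNP [th /not_implyP [sth /negP]]] := no_N N.
  by rewrite -ltNge => h; exists (M, th).
have [f Hf] := choice big_block.
pose g N := (f N).1.
have g_gt b : (b < g b)%N.
  rewrite ltnNge; apply/negP => gb.
  by have := (Hf b).2; rewrite big_geq // normr0 ltNge (ltW del0).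
pose th n := (f (block_start g n)).2 n.
have sth : signs th by move=> n; case: (Hf (block_start g n)) => + _; apply.
have : cauchy (series (fun n => (th n * eps n) *: e n) @ \oo).
  exact: cvg_cauchy (Hc th sth).
move=> /cauchy_seriesP /(_ _ del0) [[P Q] /= [[K1 _ PK] [K2 _ QK]] PQ].
have [b hb] := block_start_unbounded g_gt (maxn K1 K2).
rewrite geq_max => /andP[K1b K2b].
have /= := PQ (b, g b) (conj (PK b K1b) (QK (g b) (leq_trans K2b (ltnW (g_gt b))))).
have -> : \sum_(b <= k < g b) (th k * eps k) *: e k =
          \sum_(b <= k < g b) ((f b).2 k * eps k) *: e k.
  by apply: eq_big_nat => n bn; rewrite /th (block_start_within hb bn).
by rewrite ltNge (ltW (Hf b).2).
Qed.

End SignedSums.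

Section Bricks.
Variables (R : realType) (X : completeNormedModType R).
Implicit Types (e : nat -> X) (eps : nat -> R).

Lemma signed_series_cvg e eps th : (r_unc e eps < +oo)%E -> signs th ->
  cvg (series (fun n => (th n * eps n) *: e n) @ \oo).
Proof.
move=> r_fin sth.
have : (series_norm (fun n => (th n * eps n) *: e n) <= r_unc e eps)%E.
  by apply: ereal_sup_ubound; exists th.
rewrite /series_norm; case: asboolP => // _ r_infty.
by have := le_lt_trans r_infty r_fin; rewrite ltxx.
Qed.

Lemma coef_series_cvg e x : schauder_basis e ->
  series (fun k => coef e k x *: e k) @ \oo --> x.
Proof.
move=> /(_ x) [a [ha _]].
exact: (@xgetPex _ (fun=> 0) [set a : nat -> R | series (fun k => a k *: e k) @ \oo --> x]
  (ex_intro _ a ha)).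
Qed.

Lemma brick_tail_le e eps N del x : schauder_basis e ->
  (forall M th, signs th -> `|\sum_(N <= n < M) (th n * eps n) *: e n| <= del) ->
  brick e eps x -> `|x - series (fun k => coef e k x *: e k) N| <= del.
Proof.
move=> basis_e tailN x_brick; set u := series _.
apply: (@cvgr_to_le _ \oo _ _ (fun M => `|u M - u N|)).
  by apply: cvg_norm; apply: cvgB; [exact: coef_series_cvg | exact: cvg_cst].
exists N => // M /= NM; rewrite /u sub_series_geq //.
have [th sth] := norm_sum_le_signed_sum e N M 0 x_brick.
by rewrite !add0r => /le_trans; apply; apply: tailN.
Qed.

Lemma norm_series_sub_le e (a b : nat -> R) N : normalized e ->
  `|series (fun k => a k *: e k) N - series (fun k => b k *: e k) N|
    <= \sum_(0 <= k < N) `|a k - b k|.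
Proof.
move=> norm_e; rewrite /series /= -sumrB.
apply: le_trans (ler_norm_sum _ _ _) _; apply: ler_sum => k _.
by rewrite -scalerBl normrZ norm_e mulr1.
Qed.

End Bricks.

Theorem proposition4p3 (R : realType) (X : completeNormedModType R) (A : set X) :
  (entropy A < +oo)%E -> precompact_net A.
Proof.
move=> hE eta eta0.
have [_ [e [eps [[basis_e norm_e] _ A_brick ->]]] r_fin] := ereal_inf_lt hE.
have eta3 : 0 < eta / 3 by lra.
have [N tailN] := signed_tails_unif_small (fun _ => signed_series_cvg r_fin) eta3.
have [s [sA s_net]] := finite_net_coords N eta3 (fun n x Ax => A_brick x Ax n).
exists s; split => // x Ax; have [y ys hxy] := s_net x Ax; exists y => //.
have hx := brick_tail_le basis_e tailN (A_brick x Ax).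
have hy := brick_tail_le basis_e tailN (A_brick y (sA y ys)).
have hN := norm_series_sub_le (coef e ^~ x) (coef e ^~ y) N norm_e.
set ux := series _ N in hx hN; set uy := series _ N in hy hN.
have -> : x - y = (x - ux) + (ux - uy) - (y - uy) by rewrite opprB !addrA subrK addrNK.
by apply: le_lt_trans (ler_normB _ _) _; apply: le_lt_trans (lerD (ler_normD _ _) (lexx _)) _; lra.
Qed.
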